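(* Assume the setting below and suppose $\tau\le0$ and $|x_k^{(1)}|<a$. Let $q_k=\left\lceil\log_2\frac{(1+\tau)a}{|x_k^{(1)}|}\right\rceil$ (an integer which may be zero or negative). Then (with probability one) the step returned by the line search at iteration $k$ is $t_k=\min(1,1/2^{q_k-1})$.
   Context: Let $n\ge2$, $a\ge\sqrt{n-1}$, $f(x)=a|x^{(1)}|+\sum_{i=2}^n x^{(i)}$ on $\mathbb{R}^n$ ($x^{(i)}$ the $i$-th coordinate), $0<c_1<c_2<1$, and $\tau=c_1+\frac{(n-1)(c_1-1)}{a^2}$. The initial point $x_0$ is drawn from the normal distribution on $\mathbb{R}^n$ (independently of $a$), and $x_{k+1}=x_k+t_kd_k$, $d_k=-\nabla f(x_k)$, where $t_k$ is returned by the following Armijo–Wolfe bracketing line search: set $\alpha=0$, $\beta=+\infty$, $t=1$; repeat: if $A(t)$ fails set $\beta\leftarrow t$; else if $W(t)$ fails set $\alpha\leftarrow t$; else stop and return $t$; then if $\beta<+\infty$ set $t\leftarrow(\alpha+\beta)/2$, otherwise $t\leftarrow2\alpha$. Here $A(t)$: $f(x_k+td_k)\le f(x_k)+c_1t\nabla f(x_k)^Td_k$, and $W(t)$: $f$ is differentiable at $x_k+td_k$ and $\nabla f(x_k+td_k)^Td_k\ge c_2\nabla f(x_k)^Td_k$. All statements are understood to hold with probability one. *)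

From HB Require Import structures.
From mathcomp Require Import all_boot all_order all_algebra.
From mathcomp Require Import all_classical all_reals all_analysis.

Set Implicit Arguments.
Unset Strict Implicit.
Unset Printing Implicit Defensive.

Import Order.TTheory GRing.Theory Num.Theory.
Import numFieldNormedType.Exports.
Local Open Scope classical_set_scope.
Local Open Scope ring_scope.

Section Defs.
Variable R : realType.
Variable n : nat.

(* Coordinate x^(k+1) of x in R^n, written with 0-based index k
   (so [xcoord x 0] is the paper's x^(1)); equals 0 if k >= n. *)
Definition xcoord (x : 'rV[R]_n) (k : nat) : R :=
  \sum_(i < n | val i == k) x ord0 i.

Definition ftest (a : R) (x : 'rV[R]_n) : R :=
  a * `|xcoord x 0| + \sum_(i < n | val i != 0%N) x ord0 i.

Definition dotv (u v : 'rV[R]_n) : R := \sum_(i < n) u ord0 i * v ord0 i.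

Definition gradv (f : 'rV[R]_n -> R) (x : 'rV[R]_n) : 'rV[R]_n :=
  \row_i ('d f x (delta_mx ord0 i : 'rV[R]_n)).

Definition armijo (f : 'rV[R]_n -> R) (c1 : R) (x d : 'rV[R]_n) (t : R) : Prop :=
  f (x + t *: d) <= f x + c1 * t * dotv (gradv f x) d.

Definition wolfe (f : 'rV[R]_n -> R) (c2 : R) (x d : 'rV[R]_n) (t : R) : Prop :=
  differentiable f (x + t *: d) /\
  dotv (gradv f (x + t *: d)) d >= c2 * dotv (gradv f x) d.

(* State (alpha, beta, t) with beta = None meaning
   beta = +oo.  [ls_from f c1 c2 x d alpha beta t r] means: the line search,
   started from the state (alpha, beta, t), terminates (after finitely many
   steps) and returns r. *)
Definition ls_next (alpha : R) (beta : option R) : R :=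
  match beta with Some b => (alpha + b) / 2 | None => 2 * alpha end.

Inductive ls_from (f : 'rV[R]_n -> R) (c1 c2 : R) (x d : 'rV[R]_n) :
    R -> option R -> R -> R -> Prop :=
  | ls_stop alpha beta t :
      armijo f c1 x d t -> wolfe f c2 x d t -> ls_from f c1 c2 x d alpha beta t t
  | ls_failA alpha beta t r :
      ~ armijo f c1 x d t ->
      ls_from f c1 c2 x d alpha (Some t) (ls_next alpha (Some t)) r ->
      ls_from f c1 c2 x d alpha beta t r
  | ls_failW alpha beta t r :
      armijo f c1 x d t -> ~ wolfe f c2 x d t ->
      ls_from f c1 c2 x d t beta (ls_next t beta) r ->
      ls_from f c1 c2 x d alpha beta t r.

Definition line_search_returns (f : 'rV[R]_n -> R) (c1 c2 : R)
    (x d : 'rV[R]_n) (r : R) : Prop :=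
  ls_from f c1 c2 x d 0 None 1 r.

Definition gd_prefix (f : 'rV[R]_n -> R) (c1 c2 : R) (x0 : 'rV[R]_n)
    (xs : nat -> 'rV[R]_n) (ts : nat -> R) (k : nat) : Prop :=
  xs 0%N = x0 /\
  forall j, (j < k)%N ->
    line_search_returns f c1 c2 (xs j) (- gradv f (xs j)) (ts j) /\
    xs j.+1 = xs j + ts j *: (- gradv f (xs j)).

End Defs.

(* Mutual independence of a finite family of real random variables:
   product rule for the joint preimage of every family of Borel sets
   (taking B i = setT recovers every subfamily). *)
Definition mutually_independent {R : realType} {d} {T : measurableType d}
    (P : probability T R) (n : nat) (X : 'I_n -> {RV P >-> R}) : Prop :=
  forall B : 'I_n -> set R, (forall i, measurable (B i)) ->
    P [set w | forall i, B i (X i w)] = (\prod_(i < n) P (X i @^-1` B i))%E.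

(* Write s = sg x^(1) and g_s = (a s, 1, ..., 1).  Off the hyperplane x^(1) = 0 the function
   f coincides locally with the linear form y |-> g_s . y, so grad f(x) = g_s there, whereas f
   is not differentiable on the hyperplane.  A step t along -g_s with t a > |x^(1)| crosses the
   kink and lands where f is the linear form g_(-s); there Armijo reduces to
   t (1 + tau) a <= 2 |x^(1)|, and Wolfe always holds since the new slope along the direction is
   a^2 - (n - 1) >= 0.  Because 1 + tau <= 1, every trial step rejected by Armijo overshoots, so
   the bisection halves t until it reaches 2^-m with 2^m < rho <= 2^(m+1), where
   rho = (1 + tau) a / |x^(1)|, i.e. m = max (0, ceil (log2 rho) - 1) (for m = 0 the overshoot is
   the hypothesis |x^(1)| < a).  Finally x_0^(1) <> 0 almost surely, and since the Wolfe condition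
   requires differentiability at each accepted point, no iterate ever reaches the hyperplane. *)

From HB Require Import structures.
From mathcomp Require Import all_boot all_order all_algebra.
From mathcomp Require Import all_classical all_reals all_analysis.
From mathcomp Require Import ring lra.
Import Order.TTheory GRing.Theory Num.Theory.
Import numFieldNormedType.Exports.
Local Open Scope classical_set_scope.
Local Open Scope ring_scope.

Set Implicit Arguments.
Unset Strict Implicit.
Unset Printing Implicit Defensive.

Section DirectionalDerivatives.
Variables (R : realType) (V : normedModType R).

Lemma derive_eventually_affine (f : V -> R) (x v : V) (c : R) :
  (\forall h \near 0^', f (h *: v + x) = f x + h * c) -> 'D_v f x = c.
Proof.
move=> fE; apply: cvg_lim => //; apply/cvgrPdist_lt => e e0.
near=> h; have h0 : h != 0 by near: h; exact: nbhs_dnbhs_neq.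
rewrite /= (near fE h) // addrAC subrr add0r [_ *: _]mulKf //.
by rewrite subrr normr0.
Unshelve. all: by end_near. Qed.

Lemma not_derivable_kink (f : V -> R) (x v : V) (c : R) : c != 0 ->
  (forall h, f (h *: v + x) = f x + c * `|h|) -> ~ derivable f x v.
Proof.
move=> c0 fE; rewrite /derivable.
set q := fun h : R => _.
have qE h : h != 0 -> q h = c * Num.sg h.
  by move=> h0; rewrite /q /= fE addrAC subrr add0r normrEsg -[_ *: _]/(_ * _); field.
move=> /[dup] /cvg_at_rightE rE /cvg_at_leftE lE.
have : lim (q @ 0^'+) = lim (q @ 0^'-) by rewrite -rE -lE.
have -> : lim (q @ 0^'+) = c.
  apply: cvg_lim => //; apply: cvg_near_cst.
  by near=> h; rewrite qE ?gtr0_sg ?mulr1 ?gt_eqF //; near: h; exact: nbhs_right_gt.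
have -> : lim (q @ 0^'-) = - c.
  apply: cvg_lim => //; apply: cvg_near_cst.
  by near=> h; rewrite qE ?ltr0_sg ?mulrN1 ?lt_eqF //; near: h; exact: nbhs_left_lt.
by move/eqP; rewrite -subr_eq0 opprK -mulr2n mulrn_eq0 (negbTE c0).
Unshelve. all: by end_near. Qed.

End DirectionalDerivatives.

Lemma normr_differentiable (R : realType) (u : R) :
  u != 0 -> differentiable (fun y : R => `|y|) u.
Proof.
move=> u0; apply/derivable1_diffP.
have sgE : {near u, (fun y => Num.sg u * y) =1 (fun y : R => `|y|)}.
  case: (ltrgt0P u) u0 => // [u_gt0|u_lt0] _; near=> y.
  - by rewrite gtr0_sg // mul1r gtr0_norm //; near: y; exact: lt_nbhsr.
  - by rewrite ltr0_sg // mulN1r ltr0_norm //; near: y; exact: lt_nbhsl.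
apply: near_eq_derivable sgE _.
by apply: derivableM; [exact: derivable_cst | exact: derivable_id].
Unshelve. all: by end_near. Qed.

Section BracketingLineSearch.
Variables (R : realType) (n : nat) (f : 'rV[R]_n -> R) (c1 c2 : R) (x d : 'rV[R]_n).

Lemma ls_from_sound alpha beta t r :
  ls_from f c1 c2 x d alpha beta t r -> armijo f c1 x d r /\ wolfe f c2 x d r.
Proof. by elim. Qed.

Lemma line_search_returns_halving (m : nat) :
  (forall j, (j < m)%N -> ~ armijo f c1 x d ((2 ^+ j)^-1)) ->
  armijo f c1 x d ((2 ^+ m)^-1) -> wolfe f c2 x d ((2 ^+ m)^-1) ->
  line_search_returns f c1 c2 x d ((2 ^+ m)^-1).
Proof.
move=> notA A W.
suff halve i j beta : (i + j = m)%N -> ls_from f c1 c2 x d 0 beta ((2 ^+ j)^-1) ((2 ^+ m)^-1).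
  by have := halve m 0%N None (addn0 m); rewrite expr0 invr1.
elim: i j beta => [|i IH] j beta; first by rewrite add0n => ->; exact: ls_stop.
move=> ijm; apply: ls_failA; first by apply: notA; rewrite -ijm addSn ltnS leq_addl.
rewrite /ls_next add0r -invfM -exprSr.
by apply: IH; rewrite addnS -addSn.
Qed.

End BracketingLineSearch.

Section InnerProduct.
Variables (R : realType) (n : nat).
Implicit Types u v w : 'rV[R]_n.

Lemma dotvDr u v w : dotv u (v + w) = dotv u v + dotv u w.
Proof. by rewrite /dotv -big_split; apply: eq_bigr => i _; rewrite mxE mulrDr. Qed.

Lemma dotvZr u v t : dotv u (t *: v) = t * dotv u v.
Proof. by rewrite /dotv mulr_sumr; apply: eq_bigr => i _; rewrite mxE mulrCA. Qed.

Lemma dotvNr u v : dotv u (- v) = - dotv u v.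
Proof. by rewrite -scaleN1r dotvZr mulN1r. Qed.

Lemma dotv_delta u i : dotv u (delta_mx ord0 i) = u ord0 i.
Proof.
rewrite /dotv (bigD1 i) //= mxE !eqxx mulr1 big1 ?addr0 // => j /negbTE ji.
by rewrite mxE ji mulr0.
Qed.

End InnerProduct.

Lemma normrD_small (R : realDomainType) (u h : R) :
  `|h| < `|u| -> `|h + u| = Num.sg u * (h + u).
Proof.
have [u_gt0|u_lt0|->] := ltrgt0P u; last by rewrite ltNge normr_ge0.
- rewrite gtr0_sg // mul1r ltr_norml => /andP[hu _].
  by rewrite gtr0_norm // -ltrBlDr sub0r.
- rewrite ltr0_sg // mulN1r ltr_norml => /andP[_ hu].
  by rewrite ltr0_norm // -ltrBrDr sub0r.
Qed.

Section BinaryLogarithm.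
Variable R : realType.

Let ln2_gt0 : 0 < ln (2 : R).
Proof. by rewrite ln_gt0 // ltr1n. Qed.

Lemma expr2n_ltE (rho : R) (m : nat) : 0 < rho -> (2 ^+ m < rho) = (m%:R < ln rho / ln 2).
Proof.
move=> rho_gt0; rewrite ltr_pdivlMr // mulr_natl -lnXn //.
by rewrite ltr_ln ?posrE ?exprn_gt0.
Qed.

Lemma expr2n_geE (rho : R) (m : nat) : 0 < rho -> (rho <= 2 ^+ m) = (ln rho / ln 2 <= m%:R).
Proof. by move=> rho_gt0; rewrite !leNgt expr2n_ltE. Qed.

Lemma ceil_log2_halvings (rho : R) : 0 < rho -> exists m : nat,
  [/\ Num.min 1 ((2 : R) ^ (Num.ceil (ln rho / ln 2) - 1))^-1 = (2 ^+ m)^-1,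
      rho <= 2 ^+ m.+1 & (0 < m)%N -> 2 ^+ m < rho].
Proof.
move=> rho_gt0; set q := Num.ceil _.
have [rho_le2|rho_gt2] := leP rho 2.
  exists 0%N; split => //; rewrite expr0 invr1.
  have q_le1 : q <= 1 by rewrite ceil_le_int -expr2n_geE.
  have q_ge0 : 0 <= - (q - 1) by rewrite oppr_ge0 subr_le0.
  by rewrite invr_expz -(gez0_abs q_ge0) -exprnP min_l // exprn_ege1 // ler1n.
have q_gt1 : 1 < q by rewrite ceil_gt_int -[1%:~R]/(1%:R) -expr2n_ltE.
have [m qE] : exists m : nat, q = m.+1%:Z.
  by exists `|q - 1|%N; rewrite -addn1 PoszD gez0_abs ?subrK // subr_ge0 ltW.
have := ceil_itv (ln rho / ln 2); rewrite -/q qE -addn1 PoszD addrK => /andP[lo hi].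
exists m; rewrite -exprnP; split.
- by rewrite min_r // invf_le1 ?exprn_gt0 // exprn_ege1 // ler1n.
- by rewrite expr2n_geE //; move: hi; rewrite -PoszD addn1.
- by rewrite expr2n_ltE.
Qed.

End BinaryLogarithm.

Section TestFunction.
Variables (R : realType) (n : nat) (i0 : 'I_n) (a : R).
Hypothesis i0_val : val i0 = 0%N.

Let val_eq0 i : (val i == 0%N) = (i == i0).
Proof. by rewrite -i0_val; apply/eqP/eqP => [/val_inj|->]. Qed.

Lemma xcoordE (x : 'rV[R]_n) : xcoord x 0 = x ord0 i0.
Proof. exact: big_pred1. Qed.

Lemma ftestE (x : 'rV[R]_n) :
  ftest a x = a * `|x ord0 i0| + \sum_(i < n | val i != 0%N) x ord0 i.
Proof. by rewrite /ftest xcoordE. Qed.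

Lemma sum_split_i0 (F : 'I_n -> R) :
  \sum_(i < n) F i = F i0 + \sum_(i < n | val i != 0%N) F i.
Proof. by rewrite (bigID (fun i : 'I_n => val i == 0%N)) /= (big_pred1 i0). Qed.

Lemma sum_nonzero_index1 : \sum_(i < n | val i != 0%N) (1 : R) = (n.-1)%:R.
Proof.
apply: (@addrI _ 1); have := sum_split_i0 (fun=> 1).
by rewrite sumr_const card_ord => <-; rewrite -mulrS prednK // -i0_val ltn_ord.
Qed.

Definition piece_grad (s : R) : 'rV[R]_n :=
  \row_i (if val i == 0%N then a * s else 1).

Lemma dotv_piece_grad s (z : 'rV[R]_n) :
  dotv (piece_grad s) z = a * s * z ord0 i0 + \sum_(i < n | val i != 0%N) z ord0 i.
Proof.
rewrite /dotv sum_split_i0 !mxE i0_val eqxx; congr (_ + _).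
by apply: eq_bigr => i /negbTE i_neq0; rewrite mxE i_neq0 mul1r.
Qed.

Lemma dotv_piece_grad2 s s' :
  dotv (piece_grad s) (piece_grad s') = a ^+ 2 * (s * s') + (n.-1)%:R.
Proof.
rewrite dotv_piece_grad mxE i0_val eqxx -sum_nonzero_index1.
congr (_ + _); first ring.
by apply: eq_bigr => i /negbTE i_neq0; rewrite mxE i_neq0.
Qed.

Lemma ftest_on_piece s (z : 'rV[R]_n) :
  `|z ord0 i0| = s * z ord0 i0 -> ftest a z = dotv (piece_grad s) z.
Proof. by move=> zs; rewrite ftestE dotv_piece_grad zs mulrA. Qed.

Lemma ftest_differentiable (y : 'rV[R]_n) :
  y ord0 i0 != 0 -> differentiable (ftest a) y.
Proof.
move=> y0; have -> : ftest a =
    (fun x => a * `|x ord0 i0| + \sum_(i < n | val i != 0%N) x ord0 i).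
  by apply/funext => x; exact: ftestE.
apply: differentiableD.
  have -> : (fun x : 'rV[R]_n => a * `|x ord0 i0|) =
            a *: ((fun u : R => `|u|) \o (fun x : 'rV[R]_n => x ord0 i0)) by [].
  by apply/differentiableZ/differentiable_comp;
    [exact: differentiable_coord | exact: normr_differentiable].
have -> : (fun x : 'rV[R]_n => \sum_(i < n | val i != 0%N) x ord0 i) =
    \sum_(i < n) (fun x : 'rV[R]_n => if val i != 0%N then x ord0 i else 0).
  by rewrite fct_sumE; apply/funext => x; rewrite big_mkcond.
apply: differentiable_sum => i; case: (val i != 0%N).
  exact: differentiable_coord.
exact: differentiable_cst.
Qed.

Lemma gradv_ftest (y : 'rV[R]_n) :
  y ord0 i0 != 0 -> gradv (ftest a) y = piece_grad (Num.sg (y ord0 i0)).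
Proof.
move=> y0; apply/rowP => i; rewrite mxE -deriveE; last exact: ftest_differentiable.
apply: derive_eventually_affine; near=> h.
set z := h *: delta_mx ord0 i + y.
have zE : z ord0 i0 = h * (i0 == i)%:R + y ord0 i0 by rewrite !mxE eqxx.
have hy : `|h| < `|y ord0 i0| by near: h; apply: dnbhs0_lt; rewrite normr_gt0.
have z_sg : `|z ord0 i0| = Num.sg (y ord0 i0) * z ord0 i0.
  rewrite zE normrD_small //; apply: le_lt_trans hy.
  by rewrite normrM; case: (i0 == i); rewrite ?normr1 ?normr0 ?mulr1 ?mulr0.
rewrite !(ftest_on_piece (s := Num.sg (y ord0 i0))) -?normrEsg //.
by rewrite dotvDr dotvZr dotv_delta addrC.
Unshelve. all: by end_near. Qed.

Lemma ftest_not_differentiable (y : 'rV[R]_n) :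
  a != 0 -> y ord0 i0 = 0 -> ~ differentiable (ftest a) y.
Proof.
move=> a0 y0 /(diff_derivable (v := delta_mx ord0 i0 : 'rV[R]_n)).
apply: (not_derivable_kink a0) => h.
rewrite !ftestE !mxE !eqxx /= y0 mulr1 addr0 normr0 mulr0 add0r addrC.
congr (_ + _); apply: eq_bigr => i i_neq0.
by rewrite !mxE eqxx -val_eq0 (negbTE i_neq0) mulr0 add0r.
Qed.

Lemma piece_grad_step_coord (x : 'rV[R]_n) s t :
  (x + t *: - piece_grad s) ord0 i0 = x ord0 i0 - t * (a * s).
Proof. by rewrite !mxE i0_val eqxx mulrN. Qed.

Definition tau (c1 : R) : R := c1 + (n.-1)%:R * (c1 - 1) / a ^+ 2.

Lemma one_add_tau_gt0 c1 :
  0 < a -> (n.-1)%:R <= a ^+ 2 -> 0 < c1 -> c1 < 1 -> 0 < 1 + tau c1.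
Proof.
move=> a_gt0 N_le c1_gt0 c1_lt1; have a2_gt0 : 0 < a ^+ 2 by rewrite exprn_gt0.
rewrite -(pmulr_lgt0 _ a2_gt0) (_ : _ * _ = a ^+ 2 * (1 + c1) - (n.-1)%:R * (1 - c1)).
  have : (n.-1)%:R * (1 - c1) <= a ^+ 2 * (1 - c1) by rewrite ler_wpM2r // subr_ge0 ltW.
  by have := mulr_gt0 a2_gt0 c1_gt0; lra.
by rewrite /tau; field; rewrite gt_eqF.
Qed.

Section OvershootingStep.
Variables (c1 c2 : R) (x : 'rV[R]_n) (t : R).
Hypotheses (a_gt0 : 0 < a) (x_neq0 : x ord0 i0 != 0) (overshoot : `|x ord0 i0| < t * a).

Let s := Num.sg (x ord0 i0).
Let y := x + t *: - piece_grad s.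

Let s2 : s * s = 1.
Proof. by rewrite -expr2 sqr_sg x_neq0. Qed.

Let sg_y : Num.sg (y ord0 i0) = - s.
Proof.
rewrite /y piece_grad_step_coord.
have -> : x ord0 i0 - t * (a * s) = s * (`|x ord0 i0| - t * a).
  by rewrite -{1}(mulr_sg_norm (x ord0 i0)) -/s; ring.
by rewrite sgrM [Num.sg (_ - _)]ltr0_sg ?subr_lt0 // /s sgr_id mulrN1.
Qed.

Let y_neq0 : y ord0 i0 != 0.
Proof. by rewrite -sgr_eq0 sg_y oppr_eq0 sgr_eq0. Qed.

Let grad_x : gradv (ftest a) x = piece_grad s.
Proof. exact: gradv_ftest. Qed.

Let grad_y : gradv (ftest a) y = piece_grad (- s).
Proof. by rewrite gradv_ftest // sg_y. Qed.

Let ftest_x : ftest a x = dotv (piece_grad s) x.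
Proof. by apply: ftest_on_piece; rewrite -normrEsg. Qed.

Let ftest_y : ftest a y = dotv (piece_grad (- s)) y.
Proof. by apply: ftest_on_piece; rewrite -sg_y -normrEsg. Qed.

Let dotv_piece_grad_x s' : dotv (piece_grad s') x =
  a * (s' * s) * `|x ord0 i0| + \sum_(i < n | val i != 0%N) x ord0 i.
Proof. by rewrite dotv_piece_grad -{1}(mulr_sg_norm (x ord0 i0)) -/s; ring. Qed.

Lemma armijo_overshootE :
  armijo (ftest a) c1 x (- gradv (ftest a) x) t <->
  t * ((1 + tau c1) * a) <= 2 * `|x ord0 i0|.
Proof.
rewrite /armijo grad_x -/y ftest_y ftest_x /y dotvDr dotvZr !dotvNr.
rewrite !dotv_piece_grad2 !dotv_piece_grad_x mulNr s2.
have -> : (t * ((1 + tau c1) * a) <= 2 * `|x ord0 i0|) =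
    (t * (a ^+ 2 + c1 * a ^+ 2 + (n.-1)%:R * (c1 - 1)) <= 2 * `|x ord0 i0| * a).
  by rewrite -(ler_pM2r a_gt0) /tau; congr (_ <= _); field; rewrite gt_eqF.
by split => ?; lra.
Qed.

Lemma wolfe_overshoot : 0 <= c2 -> (n.-1)%:R <= a ^+ 2 ->
  wolfe (ftest a) c2 x (- gradv (ftest a) x) t.
Proof.
move=> c2_ge0 N_le; rewrite /wolfe grad_x -/y; split; first exact: ftest_differentiable.
rewrite grad_y !dotvNr !dotv_piece_grad2 mulNr s2.
have : 0 <= c2 * (a ^+ 2 + (n.-1)%:R) by rewrite mulr_ge0 ?addr_ge0 ?sqr_ge0.
lra.
Qed.

End OvershootingStep.

Lemma line_search_returns_ftest c1 c2 (x : 'rV[R]_n) :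
  0 < c1 -> c1 < c2 -> c2 < 1 -> (n.-1)%:R <= a ^+ 2 -> tau c1 <= 0 ->
  x ord0 i0 != 0 -> `|x ord0 i0| < a ->
  line_search_returns (ftest a) c1 c2 x (- gradv (ftest a) x)
    (Num.min 1 ((2 : R) ^ (Num.ceil (ln ((1 + tau c1) * a / `|x ord0 i0|) / ln 2) - 1))^-1).
Proof.
move=> c1_gt0 c12 c2_lt1 N_le tau_le0 x_neq0 x_lt_a.
have x_gt0 : 0 < `|x ord0 i0| by rewrite normr_gt0.
have a_gt0 : 0 < a := lt_trans x_gt0 x_lt_a.
have tau1_gt0 := one_add_tau_gt0 a_gt0 N_le c1_gt0 (lt_trans c12 c2_lt1).
set rho := (1 + tau c1) * a / `|x ord0 i0|.
have rho_gt0 : 0 < rho by rewrite !mulr_gt0 ?invr_gt0.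
have overshoot t : 0 < t -> 1 < t * rho -> `|x ord0 i0| < t * a.
  move=> t_gt0; rewrite /rho mulrA ltr_pdivlMr // mul1r => /lt_le_trans; apply.
  by rewrite ler_pM2l // ler_piMl ?gerDl // ltW.
have armijoE t : 0 < t -> `|x ord0 i0| < t * a ->
    armijo (ftest a) c1 x (- gradv (ftest a) x) t <-> t * rho <= 2.
  move=> t_gt0 tx; rewrite (armijo_overshootE c1 a_gt0 x_neq0 tx).
  by rewrite -ler_pdivrMr // -mulrA.
have [m [-> rho_le rho_gt]] := ceil_log2_halvings rho_gt0.
have inv2n_gt0 j : 0 < ((2 : R) ^+ j)^-1 by rewrite invr_gt0 exprn_gt0.
have over_m : `|x ord0 i0| < (2 ^+ m)^-1 * a.
  case: m rho_le rho_gt => [|m] _ rho_gt; first by rewrite expr0 invr1 mul1r.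
  by apply: overshoot => //; rewrite mulrC ltr_pdivlMr ?exprn_gt0 // mul1r; exact: rho_gt.
apply: line_search_returns_halving.
- move=> j jm; have rho_j : 2 < (2 ^+ j)^-1 * rho.
    rewrite mulrC ltr_pdivlMr ?exprn_gt0 // -exprS; apply: le_lt_trans (rho_gt _).
      by rewrite ler_eXn2l // ltr1n.
    exact: leq_ltn_trans jm.
  have over_j : `|x ord0 i0| < (2 ^+ j)^-1 * a.
    by apply: overshoot => //; exact: lt_trans (ltr1n _ 2) rho_j.
  by rewrite armijoE // leNgt rho_j.
- by rewrite armijoE // mulrC ler_pdivrMr ?exprn_gt0 // -exprS.
- by apply: wolfe_overshoot => //; exact: ltW (lt_trans c1_gt0 c12).
Qed.

Lemma gd_prefix_coord_neq0 c1 c2 x0 xs ts k : a != 0 ->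
  gd_prefix (ftest a) c1 c2 x0 xs ts k -> x0 ord0 i0 != 0 -> xs k ord0 i0 != 0.
Proof.
move=> a_neq0 [<- steps] x0_neq0; case: k steps => [//|j] steps.
have [/ls_from_sound [_ [D _]] ->] := steps j (ltnSn j).
by apply/eqP => y0; exact: ftest_not_differentiable a_neq0 y0 D.
Qed.

End TestFunction.

Lemma normal_rv_preimage1_null (R : realType) d (T : measurableType d)
    (P : probability T R) (Y : {RV P >-> R}) (m s r : R) :
  (forall A, measurable A -> distribution P Y A = normal_prob m s A) ->
  P (Y @^-1` [set r]) = 0%E.
Proof.
move=> Ylaw; have := Ylaw [set r] (measurable_set1 r).
rewrite /distribution /pushforward => ->.
have : lebesgue_measure.-null_set [set r].
  by apply/measure0_null_setP => //; exact: lebesgue_measure_set1.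
by move/normal_prob_dominates; apply.
Qed.

Theorem theorem4 (R : realType) (n : nat) (a c1 c2 : R)
  (d : measure_display) (T : measurableType d) (P : probability T R)
  (X : 'I_n -> {RV P >-> R}) :
  (2 <= n)%N ->
  Num.sqrt (n.-1)%:R <= a ->
  0 < c1 -> c1 < c2 -> c2 < 1 ->
  (forall i A, measurable A -> distribution P (X i) A = normal_prob 0 1 A) ->
  mutually_independent X ->
  let tau := c1 + (n.-1)%:R * (c1 - 1) / a ^+ 2 in
  tau <= 0 ->
  {ae P, forall w,
     let x0 : 'rV[R]_n := \row_i X i w in
     forall (k : nat) (xs : nat -> 'rV[R]_n) (ts : nat -> R),
       gd_prefix (ftest a) c1 c2 x0 xs ts k ->
       `|xcoord (xs k) 0| < a ->
       let qk : int :=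
         Num.ceil (ln ((1 + tau) * a / `|xcoord (xs k) 0|) / ln 2) in
       line_search_returns (ftest a) c1 c2 (xs k) (- gradv (ftest a) (xs k))
         (Num.min 1 ((2 : R) ^ (qk - 1))^-1)}.
Proof.
move=> n_ge2 sqrt_le_a c1_gt0 c12 c2_lt1 X_normal _ tau tau_le0.
pose i0 : 'I_n := Ordinal (ltnW n_ge2).
have N_ge1 : 1 <= (n.-1)%:R :> R by rewrite ler1n -ltnS prednK // ltnW.
have a_gt0 : 0 < a by apply: lt_le_trans sqrt_le_a; rewrite sqrtr_gt0 (lt_le_trans ltr01).
have N_le : (n.-1)%:R <= a ^+ 2.
  by rewrite -(sqr_sqrtr (ler0n _ _)) ler_pXn2r // ?nnegrE ?sqrtr_ge0 ?(ltW a_gt0).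
have null : P.-negligible (X i0 @^-1` [set 0]).
  apply/negligibleP; last exact: normal_rv_preimage1_null (X_normal i0).
  by rewrite -[X in measurable X]setTI; exact: measurable_funP.
apply: negligibleS null => w /= notQ; apply: contrapT => Xw_neq0; apply: notQ.
move=> k xs ts prefix; rewrite (xcoordE _ (i0 := i0)) //.
apply: line_search_returns_ftest => //.
apply: gd_prefix_coord_neq0 prefix _ => //; first exact: lt0r_neq0.
by rewrite mxE; exact/eqP.
Qed.
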